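(* There is a constant $c>0$ such that for all $n$, any family of pairwise disjoint $[1,n]$-rectangles whose union is $\mathcal{L}_n$ has at least $2^{cn}$ members.
   Context: $X=\{x_1,\dots,x_n\}$, $Y=\{y_1,\dots,y_n\}$, $Z=X\cup Y$. $\mathcal{L}_n=\{U\subseteq Z : \exists i\in[n],\ x_i\in U,\ y_i\in U\}$. A $[1,n]$-rectangle is a family $S\times T=\{U\cup V: U\in S, V\in T\}$ with $S\subseteq\mathcal{P}(X)$ and $T\subseteq\mathcal{P}(Y)$. *)

From Stdlib Require Import Reals.
From mathcomp Require Import all_boot.
Set Implicit Arguments. Unset Strict Implicit. Unset Printing Implicit Defensive.

(* Ground set Z = X ∪ Y with X = {x_1..x_n}, Y = {y_1..y_n}:
   inl i stands for x_i, inr i stands for y_i (so X and Y are disjoint). *)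
Definition Zt (n : nat) : finType := ('I_n + 'I_n)%type.

Definition Xset (n : nat) : {set Zt n} := [set inl i | i : 'I_n].
Definition Yset (n : nat) : {set Zt n} := [set inr i | i : 'I_n].

Definition Ln (n : nat) : {set {set Zt n}} :=
  [set U : {set Zt n} | [exists i : 'I_n, (inl i \in U) && (inr i \in U)]].

Definition rect (n : nat) (S T : {set {set Zt n}}) : {set {set Zt n}} :=
  [set U :|: V | U in S, V in T].

Definition is_rect (n : nat) (R : {set {set Zt n}}) : Prop :=
  exists S T : {set {set Zt n}},
    [/\ S \subset powerset (Xset n), T \subset powerset (Yset n) & R = rect S T].

From Stdlib Require Import Reals Lra.
From mathcomp Require Import all_boot all_algebra zify.
Import GRing.Theory.
Set Implicit Arguments. Unset Strict Implicit. Unset Printing Implicit Defensive.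

(* Restrict L_n to the 2^n x 2^n grid of sets {x_i : i in s} ∪ {y_i : i ∉ t}.
   Such a set lies in L_n iff s is not contained in t, so on the grid the
   indicator of L_n is J - D, where J is the all-ones matrix and D the
   inclusion matrix of the subsets of [n].  D is triangular for the order by
   cardinality with unit diagonal, hence has rank 2^n.  A rectangle S × T
   restricts to a product of a column and a row, a matrix of rank at most one,
   and a disjoint cover of L_n restricts to a sum of these.  Hence
   2^n <= 1 + #|F|. *)

Section RankLemmas.
Variable K : fieldType.
Local Open Scope ring_scope.

Lemma row_free_triangular k (A : 'M[K]_k) (w : 'I_k -> nat) :
  (forall i, A i i != 0) ->
  (forall i j, i != j -> A i j != 0 -> (w i < w j)%N) ->
  row_free A.
Proof.
move=> diagA triA; apply: inj_row_free => v vA0; apply/rowP => i; rewrite mxE.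
apply/eqP/negPn/negP => vi0.
case: (arg_minnP (P := fun l => v 0 l != 0) w vi0) => i0 vi00 i0_min.
have := congr1 (fun u : 'rV_k => u 0 i0) vA0.
rewrite !mxE (bigD1 i0) //= big1 ?addr0 => [/eqP | l ne_li0].
  by rewrite mulf_eq0 (negbTE vi00) (negbTE (diagA i0)).
have [-> | vl0] := eqVneq (v 0 l) 0; first by rewrite mul0r.
have [-> | Ali0] := eqVneq (A l i0) 0; first by rewrite mulr0.
by have := i0_min l vl0; rewrite leqNgt triA.
Qed.

Lemma mxrank_col_mul_row m n (u : 'cV[K]_m) (w : 'rV[K]_n) : (\rank (u *m w) <= 1)%N.
Proof. exact: leq_trans (mxrankM_maxl u w) (rank_leq_col u). Qed.

Lemma mxrank_sum_le (I : finType) (P : pred I) m n (M : I -> 'M[K]_(m, n)) :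
  (\rank (\sum_(i in P) M i)%R <= \sum_(i in P) \rank (M i))%N.
Proof.
apply: (big_ind2 (fun (A : 'M_(m, n)) r => \rank A <= r)%N) => //.
- by rewrite mxrank0.
- by move=> A a B b rA rB; exact: leq_trans (mxrank_add A B) (leq_add rA rB).
Qed.

End RankLemmas.

Definition set_of_ord (T : finType) (i : 'I_#|{set T}|) : {set T} := enum_val i.

Definition inclusion_mx (K : fieldType) (T : finType) : 'M[K]_#|{set T}| :=
  (\matrix_(i, j) (set_of_ord i \subset set_of_ord j)%:R)%R.

Lemma inclusion_mx_row_free (K : fieldType) (T : finType) :
  row_free (inclusion_mx K T).
Proof.
apply: (row_free_triangular (w := fun i => #|set_of_ord i|)) => [i | i j neij].
  by rewrite mxE subxx oner_eq0.
rewrite mxE; have [sub_ij _ | _] := boolP (set_of_ord i \subset set_of_ord j).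
  apply: proper_card.
  by rewrite properEneq sub_ij andbT (inj_eq enum_val_inj).
by rewrite eqxx.
Qed.

Lemma sum_mem_trivIset (T : finType) (P : {set {set T}}) x :
  trivIset P -> \sum_(B in P) (x \in B) = (x \in cover P).
Proof.
move=> /trivIsetP disjP.
have [/bigcupP[B0 PB0 xB0] | xNP] := boolP (x \in cover P); last first.
  rewrite big1 // => B PB; apply/eqP; rewrite eqb0.
  by apply: contra xNP => xB; apply/bigcupP; exists B.
rewrite (bigD1 B0) //= xB0 big1 // => B /andP[PB neB].
by apply/eqP; rewrite eqb0 (disjointFl (disjP B B0 PB PB0 neB)).
Qed.

Lemma setIU_disjoint_id (T : finType) (A B U V : {set T}) :
  [disjoint A & B] -> U \subset A -> V \subset B -> (U :|: V) :&: A = U.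
Proof.
move=> dAB sUA sVB; rewrite disjoint_sym in dAB.
by rewrite setIUl (setIidPl sUA) (disjoint_setI0 (disjointWl sVB dAB)) setU0.
Qed.

Lemma setU_disjoint_inj (T : finType) (A B U U' V V' : {set T}) :
  [disjoint A & B] -> U \subset A -> U' \subset A -> V \subset B -> V' \subset B ->
  U :|: V = U' :|: V' -> U = U' /\ V = V'.
Proof.
move=> dAB sUA sU'A sVB sV'B eqUV.
have dBA : [disjoint B & A] by rewrite disjoint_sym.
split; first by rewrite -(setIU_disjoint_id dAB sUA sVB) eqUV (setIU_disjoint_id dAB).
by rewrite -(setIU_disjoint_id dBA sVB sUA) setUC eqUV setUC (setIU_disjoint_id dBA).
Qed.

Lemma mxrank_const_mx (K : fieldType) m n (a : K) : (\rank (const_mx a : 'M_(m, n)) <= 1)%N.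
Proof.
have -> : const_mx a = ((const_mx a : 'cV_m) *m (const_mx 1 : 'rV_n))%R.
  by apply/matrixP => i j; rewrite !mxE big_ord1 !mxE mulr1.
exact: mxrank_col_mul_row.
Qed.

Lemma card_set_type (T : finType) : #|{set T}| = 2 ^ #|T|.
Proof.
rewrite -cardsT -card_powerset; apply: eq_card => A.
by rewrite powersetE subsetT.
Qed.

Section Grid.
Variable n : nat.

Definition Xsub (s : {set 'I_n}) : {set Zt n} := [set inl i | i in s].
Definition Ysub (t : {set 'I_n}) : {set Zt n} := [set inr i | i in ~: t].

Lemma in_Xsub s z : (z \in Xsub s) = if z is inl i then i \in s else false.
Proof. by case: z => i; [apply: mem_imset => ? ? [] | apply/imsetP => -[]]. Qed.

Lemma in_Ysub t z : (z \in Ysub t) = if z is inr i then i \notin t else false.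
Proof.
by case: z => i; [apply/imsetP => -[] | rewrite -in_setC; apply: mem_imset => ? ? []].
Qed.

Lemma Xsub_subset s : Xsub s \subset Xset n.
Proof. by apply/subsetP => _ /imsetP[i _ ->]; apply: imset_f. Qed.

Lemma Ysub_subset t : Ysub t \subset Yset n.
Proof. by apply/subsetP => _ /imsetP[i _ ->]; apply: imset_f. Qed.

Lemma disjoint_XY : [disjoint Xset n & Yset n].
Proof.
apply/pred0P => z /=; apply/andP => -[/imsetP[i _ ->]].
by case/imsetP.
Qed.

Lemma mem_rect (S T : {set {set Zt n}}) (U V : {set Zt n}) :
  S \subset powerset (Xset n) -> T \subset powerset (Yset n) ->
  U \subset Xset n -> V \subset Yset n ->
  (U :|: V \in rect S T) = (U \in S) && (V \in T).
Proof.
move=> /subsetP sSX /subsetP sTY sUX sVY; apply/imset2P/andP => [[U' V' SU' TV' eqUV] | [SU TV]].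
  have sU'X : U' \subset Xset n by rewrite -powersetE sSX.
  have sV'Y : V' \subset Yset n by rewrite -powersetE sTY.
  by have [-> ->] := setU_disjoint_inj disjoint_XY sUX sU'X sVY sV'Y eqUV.
by exists U V.
Qed.

Lemma Ln_grid s t : (Xsub s :|: Ysub t \in Ln n) = ~~ (s \subset t).
Proof.
rewrite inE; apply/existsP/subsetPn => -[i].
  by rewrite !inE !in_Xsub !in_Ysub orbF => /andP[si nti]; exists i.
by move=> si nti; exists i; rewrite !inE !in_Xsub !in_Ysub si nti.
Qed.

Local Open Scope ring_scope.

Definition grid_mx (R : {set {set Zt n}}) : 'M[rat]_#|{set 'I_n}| :=
  \matrix_(i, j) (Xsub (set_of_ord i) :|: Ysub (set_of_ord j) \in R)%:R.

Lemma mxrank_grid_rect R : is_rect R -> (\rank (grid_mx R) <= 1)%N.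
Proof.
move=> [S [T [sSX sTY ->]]].
pose colS : 'cV[rat]_#|{set 'I_n}| := \col_i (Xsub (set_of_ord i) \in S)%:R.
pose rowT : 'rV[rat]_#|{set 'I_n}| := \row_j (Ysub (set_of_ord j) \in T)%:R.
suff -> : grid_mx (rect S T) = colS *m rowT by apply: mxrank_col_mul_row.
apply/matrixP => i j; rewrite !mxE big_ord1 !mxE -natrM mulnb.
by rewrite mem_rect ?Xsub_subset ?Ysub_subset.
Qed.

Lemma sum_grid_mx (F : {set {set {set Zt n}}}) :
  trivIset F -> \sum_(R in F) grid_mx R = grid_mx (cover F).
Proof.
move=> trivF; apply/matrixP => i j; rewrite summxE mxE -sum_mem_trivIset //.
by rewrite natr_sum; apply: eq_bigr => R _; rewrite mxE.
Qed.

Lemma grid_mx_Ln : grid_mx (Ln n) = const_mx 1 - inclusion_mx rat 'I_n.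
Proof.
apply/matrixP => i j; rewrite !mxE Ln_grid.
by case: (_ \subset _); rewrite ?subr0 ?subrr.
Qed.

Lemma card_rect_partition_Ln (F : {set {set {set Zt n}}}) :
  (forall R, R \in F -> is_rect R) -> trivIset F -> cover F = Ln n ->
  (2 ^ n <= 1 + #|F|)%N.
Proof.
move=> rectF trivF coverF.
have <- : #|{set 'I_n}| = (2 ^ n)%N by rewrite card_set_type card_ord.
have inclusion_eq : inclusion_mx rat 'I_n = const_mx 1 - \sum_(R in F) grid_mx R.
  by rewrite sum_grid_mx // coverF grid_mx_Ln opprB addrC subrK.
apply: leq_trans (_ : \rank (inclusion_mx rat 'I_n) <= _)%N.
  by rewrite row_leq_rank inclusion_mx_row_free.
rewrite inclusion_eq; apply: leq_trans (mxrank_add _ _) _; rewrite mxrank_opp.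
apply: leq_add; first exact: mxrank_const_mx.
apply: leq_trans (mxrank_sum_le _ _) _; rewrite -sum1_card.
by apply: leq_sum => R FR; apply: mxrank_grid_rect; apply: rectF.
Qed.

End Grid.

Lemma pred_expn2_le_of_le_succ n f : (0 < n)%N -> (2 ^ n <= 1 + f)%N -> (2 ^ n.-1 <= f)%N.
Proof.
case: n => // n _; rewrite expnS.
by move: (2 ^ n)%N (expn_gt0 2 n) => x x_gt0; lia.
Qed.

Local Open Scope R_scope.

Lemma INR_expn m k : INR (m ^ k) = INR m ^ k.
Proof. by elim: k => [|k IHk] //; rewrite expnS -multE mult_INR IHk. Qed.

Lemma Rpower2_half_le n : (2 <= n)%N -> Rpower 2 (1 / 2 * INR n) <= INR (2 ^ n.-1).
Proof.
move=> n_ge2; rewrite INR_expn -Rpower_pow; last by simpl; lra.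
have n_pred : INR n = INR n.-1 + 1 by rewrite -S_INR prednK // (leq_trans _ n_ge2).
have n_ge2R : 2 <= INR n by apply: (le_INR 2); apply/leP.
by apply: Rle_Rpower; simpl; lra.
Qed.

Theorem mainTheorem10 :
  exists c : R, Rlt 0 c /\
  exists n0 : nat, forall n : nat, (n0 <= n)%N ->
  forall F : {set {set {set Zt n}}},
    (forall R, R \in F -> is_rect R) ->
    (forall R1 R2, R1 \in F -> R2 \in F -> R1 != R2 -> [disjoint R1 & R2]) ->
    \bigcup_(R in F) R = Ln n ->
    Rle (Rpower 2 (Rmult c (INR n))) (INR #|F|).
Proof.
exists (1 / 2); split; first lra.
exists 2%N => n n_ge2 F rectF disjF coverF.
have trivF : trivIset F by apply/trivIsetP => R1 R2; apply: disjF.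
apply: Rle_trans (Rpower2_half_le n_ge2) _; apply/le_INR/leP.
apply: pred_expn2_le_of_le_succ; first exact: leq_trans n_ge2.
exact: card_rect_partition_Ln rectF trivF coverF.
Qed.
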